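(* Let $G=(V,D,B)$ be a mixed graph, $v\in V$, and $A\subseteq V\setminus(\{v\}\cup\mathrm{sib}(v))$. There exists a set $Y\subseteq A$ satisfying the half-trek criterion with respect to $v$ if and only if the maximum flow in the network $G_{\mathrm{flow}}(v,A)$ has size $|\mathrm{pa}(v)|$.
   Context: A mixed graph is $G=(V,D,B)$ with $V=[m]$, $D$ directed edges $v\to w$, $B$ symmetric bidirected edges $v\leftrightarrow w$, no self-loops. $\mathrm{pa}(v)=\{w:w\to v\in D\}$, $\mathrm{sib}(v)=\{w:w\leftrightarrow v\in B\}$. A half-trek from $y$ to $w$ is a path $y\leftrightarrow w_0\to w_1\to\cdots\to w_r=w$ (left side $\{y\}$, right side $\{w_0,\dots,w_r\}$) or $y\to w_1\to\cdots\to w_r=w$, $r\ge0$ (left side $\{y\}$, right side $\{y,w_1,\dots,w_r\}$); nodes may repeat. A system of half-treks from $X$ to $Y$: half-treks with distinct sources forming $X$ and distinct targets forming $Y$; no sided intersection: pairwise disjoint left sides and pairwise disjoint right sides. $Y$ satisfies the half-trek criterion w.r.t. $v$ if $|Y|=|\mathrm{pa}(v)|$, $Y\cap(\{v\}\cup\mathrm{sib}(v))=\emptyset$, and there is a system of half-treks with no sided intersection from $Y$ to $\mathrm{pa}(v)$. Flows: given a directed graph with source $s$, sink $t$, node capacities $c_V\ge0$ and edge capacities $c_D\ge0$, a flow is $f:\text{edges}\to\mathbb{R}_{\ge0}$ with $f(e)\le c_D(e)$ for all edges and, for every node $x\ne s,t$, $\sum_u f(u,x)=\sum_w f(x,w)\le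 c_V(x)$; its size is $|f|=\sum_w f(s,w)$. The network $G_{\mathrm{flow}}(v,A)$ has nodes $s,t$, a node $L(a)$ for each $a\in A$, and a node $R(w)$ for each $w\in V$; its edges are $s\to L(a)$ and $L(a)\to R(a)$ for each $a\in A$, $L(a)\to R(w)$ for each $a\in A$ and $w$ with $a\leftrightarrow w\in B$, $R(w)\to R(u)$ for each $w\to u\in D$, and $R(w)\to t$ for each $w\in\mathrm{pa}(v)$. All edges and the nodes $s,t$ have capacity $\infty$; all other nodes have capacity $1$. *)

From HB Require Import structures.
From mathcomp Require Import all_boot all_order all_algebra.
Set Implicit Arguments. Unset Strict Implicit. Unset Printing Implicit Defensive.
Import Order.TTheory GRing.Theory Num.Theory.

(*  D w u  <->  w -> u in D ;   B w u  <->  w <-> u in B               *)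

Definition mixed_graph (m : nat) (D B : rel 'I_m) : Prop :=
  (forall x, ~~ D x x) /\ (forall x, ~~ B x x) /\ (forall x y, B x y = B y x).

Definition pa m (D : rel 'I_m) (v : 'I_m) : {set 'I_m} := [set w | D w v].
Definition sib m (B : rel 'I_m) (v : 'I_m) : {set 'I_m} := [set w | B w v].

(* A half-trek is encoded as (source y, target w, bidirected-start flag b, p).
   - b = true : y <-> w0 -> w1 -> ... -> wr = w with p = [:: w0; ...; wr]
                (p non-empty); left side {y}, right side {w0,...,wr}.
   - b = false: y -> w1 -> ... -> wr = w with p = [:: w1; ...; wr]
                (r >= 0, p possibly empty); left side {y},
                right side {y, w1, ..., wr}. Nodes may repeat. *)
Definition halftrek (m : nat) : Type := ('I_m * 'I_m * bool * seq 'I_m)%type.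

Definition ht_source m (h : halftrek m) : 'I_m := h.1.1.1.
Definition ht_target m (h : halftrek m) : 'I_m := h.1.1.2.

Definition is_half_trek m (D B : rel 'I_m) (h : halftrek m) : bool :=
  let: (y, w, b, p) := h in
  if b then
    (if p is w0 :: p' then [&& B y w0, path D w0 p' & last w0 p' == w]
     else false)
  else path D y p && (last y p == w).

Definition ht_left m (h : halftrek m) : {set 'I_m} := [set ht_source h].

Definition ht_right m (h : halftrek m) : {set 'I_m} :=
  let: (y, w, b, p) := h in
  if b then [set x in p] else [set x in y :: p].

Definition ht_system_nsi m (D B : rel 'I_m) (X Y : {set 'I_m}) : Prop :=
  exists (k : nat) (h : 'I_k -> halftrek m),
    (forall i, is_half_trek D B (h i)) /\
    injective (fun i => ht_source (h i)) /\
    [set ht_source (h i) | i in 'I_k] = X /\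
    injective (fun i => ht_target (h i)) /\
    [set ht_target (h i) | i in 'I_k] = Y /\
    (forall i j, i != j -> [disjoint ht_left (h i) & ht_left (h j)]) /\
    (forall i j, i != j -> [disjoint ht_right (h i) & ht_right (h j)]).

Definition half_trek_criterion m (D B : rel 'I_m) (Y : {set 'I_m}) (v : 'I_m)
  : Prop :=
  [/\ #|Y| = #|pa D v|,
      Y :&: (v |: sib B v) = set0 &
      ht_system_nsi D B Y (pa D v)].

(* Capacities take values in option R, with None standing for infinity. *)
(* A flow is a function on (ordered) pairs of nodes; only its values on *)
(* edges (E x y) are relevant.                                          *)

Local Open Scope ring_scope.

Definition le_cap (R : realFieldType) (c : option R) (x : R) : bool :=
  if c is Some c' then x <= c' else true.

Definition inflow (R : realFieldType) (N : finType) (E : rel N)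
  (f : N -> N -> R) (x : N) : R := \sum_(u | E u x) f u x.
Definition outflow (R : realFieldType) (N : finType) (E : rel N)
  (f : N -> N -> R) (x : N) : R := \sum_(w | E x w) f x w.

Definition is_flow (R : realFieldType) (N : finType) (E : rel N) (s t : N)
  (cV : N -> option R) (cD : N -> N -> option R) (f : N -> N -> R) : Prop :=
  (forall x y, E x y -> 0 <= f x y /\ le_cap (cD x y) (f x y)) /\
  (forall x, x != s -> x != t ->
     inflow E f x = outflow E f x /\ le_cap (cV x) (inflow E f x)).

Definition flow_size (R : realFieldType) (N : finType) (E : rel N) (s : N)
  (f : N -> N -> R) : R := outflow E f s.

Definition max_flow_size_is (R : realFieldType) (N : finType) (E : rel N)
  (s t : N) (cV : N -> option R) (cD : N -> N -> option R) (k : R) : Prop :=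
  (exists f, is_flow E s t cV cD f /\ flow_size E s f = k) /\
  (forall f, is_flow E s t cV cD f -> flow_size E s f <= k).

Inductive fnode (m : nat) : Type :=
| Src | Snk | Lnode of 'I_m | Rnode of 'I_m.
Arguments Src {m}. Arguments Snk {m}.

Definition fnode_enc m (x : fnode m) : (bool + ('I_m + 'I_m))%type :=
  match x with
  | Src => inl true | Snk => inl false
  | Lnode a => inr (inl a) | Rnode w => inr (inr w)
  end.
Definition fnode_dec m (x : (bool + ('I_m + 'I_m))%type) : fnode m :=
  match x with
  | inl true => Src | inl false => Snk
  | inr (inl a) => Lnode a | inr (inr w) => Rnode w
  end.
Lemma fnode_encK m : cancel (@fnode_enc m) (@fnode_dec m).
Proof. by case. Qed.

HB.instance Definition _ m := Finite.copy (fnode m) (can_type (@fnode_encK m)).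

(* Nodes L(a) exist only for a in A: for a not in A, Lnode a is an
   isolated node (no incident edge), hence irrelevant. *)
Definition gflow_edge m (D B : rel 'I_m) (v : 'I_m) (A : {set 'I_m})
  : rel (fnode m) :=
  fun x y =>
    match x, y with
    | Src, Lnode a => a \in A
    | Lnode a, Rnode w => (a \in A) && ((w == a) || B a w)
    | Rnode w, Rnode u => D w u
    | Rnode w, Snk => D w v
    | _, _ => false
    end.

Definition gflow_cap_node (R : realFieldType) m (x : fnode m) : option R :=
  match x with Src | Snk => None | _ => Some 1 end.

Definition gflow_cap_edge (R : realFieldType) m (x y : fnode m) : option R :=
  None.

From HB Require Import structures.
From mathcomp Require Import all_boot all_order all_algebra.
From Stdlib Require Import Classical.
Import Order.TTheory GRing.Theory Num.Theory.
Set Implicit Arguments. Unset Strict Implicit. Unset Printing Implicit Defensive.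

(* If Y satisfies the criterion, its half-treks give |pa(v)| disjoint paths,
   hence a flow of size |pa(v)|; R(pa(v)) is a separator, so no flow is
   larger.  Conversely a flow of size |pa(v)| makes every inner separator at
   least that large, and the walks provided by Menger's theorem decode into a
   half-trek system from a subset of A. *)

Section Menger.
Variable T : finType.
Implicit Types (E e : rel T) (X Y Z S : {set T}).

Definition separates E X Y S :=
  forall a p, a \in X -> path E a p -> last a p \in Y ->
    exists2 u, u \in a :: p & u \in S.

Definition linkage E X Y k (P : 'I_k -> T * seq T) : Prop :=
  (forall i, [/\ (P i).1 \in X, path E (P i).1 (P i).2 &
                 last (P i).1 (P i).2 \in Y]) /\
  (forall i j u, u \in (P i).1 :: (P i).2 -> u \in (P j).1 :: (P j).2 -> i = j).
#[global] Arguments linkage : clear implicits.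

Definition edel E x y : rel T := fun u w => E u w && ((u, w) != (x, y)).

Definition edges E := [set e : T * T | E e.1 e.2].

Lemma walk_uses_edge E x y a p : path E a p -> ~~ path (edel E x y) a p ->
  x \in a :: p /\ y \in a :: p.
Proof.
elim: p a => [|b p IH] a //= /andP[Eab Hp].
rewrite /edel negb_and Eab /=; case/orP.
  by rewrite negbK xpair_eqE => /andP[/eqP-> /eqP->]; rewrite !inE !eqxx !orbT.
by move/(IH _ Hp); rewrite !inE => -[-> ->]; rewrite !orbT.
Qed.

Lemma path_edel_src E x y a p : path E a p ->
  {in belast a p, forall u, u != x} -> path (edel E x y) a p.
Proof.
elim: p a => [|b p IH] a //= /andP[Eab Hp] Hu.
rewrite /edel Eab /= xpair_eqE negb_and (Hu a) ?inE ?eqxx //=.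
by apply: IH => // u Hu'; apply: Hu; rewrite inE Hu' orbT.
Qed.

Lemma path_edel_tgt E x y a p : path E a p ->
  {in p, forall u, u != y} -> path (edel E x y) a p.
Proof.
elim: p a => [|b p IH] a //= /andP[Eab Hp] Hu.
rewrite /edel Eab /= xpair_eqE negb_and (Hu b) ?inE ?eqxx ?orbT //=.
by apply: IH => // u Hu'; apply: Hu; rewrite inE Hu' orbT.
Qed.

Lemma prefix_first e Z a p : path e a p ->
  (exists2 u, u \in a :: p & u \in Z) ->
  exists p1, [/\ path e a p1, last a p1 \in Z,
     {in belast a p1, forall u, u \notin Z} & {subset a :: p1 <= a :: p}].
Proof.
elim: p a => [|b p IH] a /= Hp [u].
  by rewrite inE => /eqP-> uZ; exists [::]; split.
have [aZ _ _|aZ] := boolP (a \in Z).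
  by exists [::]; split=> // w; rewrite mem_seq1 => /eqP->; rewrite mem_head.
rewrite inE; case/orP => [/eqP-> /(negP aZ)//|uin uZ].
case/andP: Hp => eab Hp.
have [p1 [P1 L1 B1 S1]] := IH b Hp (ex_intro2 _ _ u uin uZ).
exists (b :: p1); split => /=; first by rewrite eab.
- done.
- by move=> w; rewrite inE => /orP[/eqP->|/B1].
- move=> w; rewrite inE => /orP[/eqP->|/S1 H]; first exact: mem_head.
  by rewrite inE H orbT.
Qed.

Lemma suffix_last e Z b q : path e b q ->
  (exists2 u, u \in b :: q & u \in Z) ->
  exists b' q', [/\ b' \in Z, path e b' q', last b' q' = last b q,
     {in q', forall u, u \notin Z} & {subset b' :: q' <= b :: q}].
Proof.
elim: q b => [|c q IH] b /= Hp [u].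
  by rewrite inE => /eqP-> uZ; exists b, [::]; split.
case/andP: Hp => ebc Hp.
have [/hasP[w win wZ] _ _|/hasPn Hn] := boolP (has (mem Z) (c :: q)).
  have [b' [q' [B1 P1 L1 N1 S1]]] := IH c Hp (ex_intro2 _ _ w win wZ).
  by exists b', q'; split=> // z /S1 H; rewrite inE H orbT.
rewrite inE; case/orP => [/eqP-> bZ|uin uZ].
  by exists b, (c :: q); split=> //=; rewrite ebc.
by have := Hn u uin; rewrite /= uZ.
Qed.

Lemma suffix_at e z b q : path e b q -> z \in b :: q ->
  exists q2, [/\ path e z q2, last z q2 = last b q & {subset q2 <= q}].
Proof.
elim: q b => [|c q IH] b /= Hp.
  by rewrite inE => /eqP->; exists [::].
case/andP: Hp => ebc Hp; rewrite inE; case/orP => [/eqP->|zin].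
  by exists (c :: q); split => //=; rewrite ebc.
have [q2 [P2 L2 S2]] := IH c Hp zin.
by exists q2; split => // w /S2 H; rewrite inE H orbT.
Qed.

Lemma splice e a p b q z : path e a p -> path e b q ->
  z \in a :: p -> z \in b :: q ->
  exists r, [/\ path e a r, last a r = last b q &
   {subset a :: r <= [pred u | (u == z) || (u \in belast a p) || (u \in q)]}].
Proof.
move=> Hp Hq Hzp Hzq; have [q2 [P2 L2 S2]] := suffix_at Hq Hzq.
have tail_ok : {subset z :: q2 <= [pred u | (u == z) || (u \in q)]}.
  by move=> w; rewrite inE => /orP[/eqP->|/S2 H]; rewrite inE ?eqxx ?H ?orbT.
elim: p a Hp Hzp => [|c p IH] a /= Hp.
  rewrite inE => /eqP Hz; subst z; exists q2; split=> // w /tail_ok.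
  by rewrite !inE => /orP[->|->]; rewrite ?orbT.
have [<- _|Hz] := eqVneq z a.
  exists q2; split=> // w /tail_ok.
  by rewrite !inE => /orP[->|->]; rewrite ?orbT.
rewrite inE (negPf Hz) /= => Hzc; case/andP: Hp => eac Hp.
have [r [Pr Lr Sr]] := IH c Hp Hzc.
exists (c :: r); split => //=; first by rewrite eac.
move=> w; rewrite inE; case/orP => [/eqP->|/Sr]; first by rewrite !inE eqxx ?orbT.
by rewrite !inE => /orP[/orP[->|->]|->]; rewrite ?orbT.
Qed.

Lemma in_last_only Z a p u : u \in a :: p -> u \in Z ->
  {in belast a p, forall w, w \notin Z} -> u = last a p.
Proof.
rewrite lastI mem_rcons inE => /orP[/eqP-> //|ub] uZ H.
by move: (H u ub); rewrite uZ.
Qed.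

Lemma linkage_sub e e' X Y k P : subrel e' e ->
  linkage e' X Y k P -> linkage e X Y k P.
Proof.
move=> sub [P1 P2]; split=> // i; have [? ? ?] := P1 i.
by split=> //; apply: (sub_path sub).
Qed.

(* Without edges, X :&: Y is the only X-Y walk set, so it bounds separators. *)
Lemma menger_edgeless E X Y k : edges E = set0 ->
  (forall S, separates E X Y S -> k <= #|S|) -> exists P, linkage E X Y k P.
Proof.
move=> E0 Hs.
have noE u w : ~~ E u w.
  apply/negP => Euw; have : (u, w) \in edges E by rewrite inE.
  by rewrite E0 inE.
have Hk : k <= #|X :&: Y|.
  apply: Hs => a [|b p] Xa /= Hp Ya; last by rewrite (negbTE (noE a b)) in Hp.
  by exists a; rewrite ?inE ?Xa ?Ya.
exists (fun i => (enum_val (widen_ord Hk i), [::])); split.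
  by move=> i /=; have := enum_valP (widen_ord Hk i); rewrite inE => /andP[-> ->].
move=> i j u /=; rewrite !mem_seq1 => /eqP-> /eqP /enum_val_inj H.
by apply/val_inj; move: H => /(congr1 val).
Qed.

Lemma separates_edel E x y X Y S z : (z = x) \/ (z = y) ->
  separates (edel E x y) X Y S -> separates E X Y (z |: S).
Proof.
move=> hz HS a p Xa Pp Yl; have [H'|H'] := boolP (path (edel E x y) a p).
  by have [u uin uS] := HS a p Xa H' Yl; exists u; rewrite // inE uS orbT.
have [xp yp] := walk_uses_edge Pp H'.
by exists z; [case: hz => -> | rewrite setU11].
Qed.

(* If x |: S separates X from Y in E, then any separator between X and x |: S
   in E - (x -> y) also separates X from Y in E: cut each walk at its first
   visit of x |: S. *)
Lemma separates_front E x y X Y S Tt : separates E X Y (x |: S) ->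
  separates (edel E x y) X (x |: S) Tt -> separates E X Y Tt.
Proof.
move=> Hx HT a p Xa Pp Yl; have [u uin uSx] := Hx a p Xa Pp Yl.
have [p1 [P1 L1 B1 S1]] := prefix_first Pp (ex_intro2 _ _ u uin uSx).
have P1' : path (edel E x y) a p1.
  by apply: (path_edel_src y P1) => w /B1; apply: contra => /eqP->; apply: setU11.
by have [w win wT] := HT a p1 Xa P1' L1; exists w => //; apply: S1.
Qed.

(* Symmetrically, cutting each walk at its last visit of y |: S. *)
Lemma separates_back E x y X Y S Tt : separates E X Y (y |: S) ->
  separates (edel E x y) (y |: S) Y Tt -> separates E X Y Tt.
Proof.
move=> Hy HT a p Xa Pp Yl; have [u uin uSy] := Hy a p Xa Pp Yl.
have [b1 [q1 [B1 P1 L1 N1 S1]]] := suffix_last Pp (ex_intro2 _ _ u uin uSy).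
have P1' : path (edel E x y) b1 q1.
  by apply: (path_edel_tgt x P1) => w /N1; apply: contra => /eqP->; apply: setU11.
have L1' : last b1 q1 \in Y by rewrite L1.
by have [w win wT] := HT b1 q1 B1 P1' L1'; exists w => //; apply: S1.
Qed.

Lemma linkage_trim_end e X Z k P : linkage e X Z k P ->
  exists P', linkage e X Z k P' /\
    forall i, {in belast (P' i).1 (P' i).2, forall u, u \notin Z}.
Proof.
move=> [P1 P2].
have : forall i, exists p1, [/\ path e (P i).1 p1, last (P i).1 p1 \in Z,
     {in belast (P i).1 p1, forall u, u \notin Z} &
     {subset (P i).1 :: p1 <= (P i).1 :: (P i).2}].
  move=> i; have [_ Pp Pl] := P1 i; apply: prefix_first Pp _.
  by exists (last (P i).1 (P i).2) => //; apply: mem_last.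
case/fin_all_exists => p1 Hp1.
exists (fun i => ((P i).1, p1 i)); split=> [|i]; last by case: (Hp1 i).
split=> [i|i j u /=]; first by have [? _ _] := P1 i; have [] := Hp1 i.
have [_ _ _ Si] := Hp1 i; have [_ _ _ Sj] := Hp1 j.
by move=> /Si ui /Sj uj; apply: P2 ui uj.
Qed.

Lemma linkage_trim_start e Z Y k Q : linkage e Z Y k Q ->
  exists Q', linkage e Z Y k Q' /\ forall i, {in (Q' i).2, forall u, u \notin Z}.
Proof.
move=> [Q1 Q2].
have : forall i, exists bq, [/\ bq.1 \in Z, path e bq.1 bq.2,
     last bq.1 bq.2 \in Y, {in bq.2, forall u, u \notin Z} &
     {subset bq.1 :: bq.2 <= (Q i).1 :: (Q i).2}].
  move=> i; have [Qa Qp Ql] := Q1 i.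
  have [b1 [q1 [B1 P1 L1 N1 S1]]] := suffix_last Qp (ex_intro2 _ (fun u => u \in Z) _ (mem_head _ _) Qa).
  by exists (b1, q1); split => //; rewrite L1.
case/fin_all_exists => bq Hbq.
exists bq; split=> [|i]; last by case: (Hbq i).
split=> [i|i j u]; first by case: (Hbq i).
have [_ _ _ _ Si] := Hbq i; have [_ _ _ _ Sj] := Hbq j.
by move=> /Si ui /Sj uj; apply: Q2 ui uj.
Qed.

Lemma linkage_onto e Z Y k Q : linkage e Z Y k Q -> #|Z| = k ->
  forall u, u \in Z -> exists j, (Q j).1 = u.
Proof.
move=> [Q1 Q2] cZ u uZ.
have inj : injective (fun j => (Q j).1).
  by move=> j1 j2 /= H; apply: (Q2 j1 j2 (Q j1).1); rewrite ?H mem_head.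
have : [set (Q j).1 | j in 'I_k] == Z.
  rewrite eqEcard cZ card_imset // card_ord leqnn andbT.
  by apply/subsetP => w /imsetP [j _ ->]; case: (Q1 j).
by move/eqP => Himg; move: uZ; rewrite -Himg => /imsetP [j _ ->]; exists j.
Qed.

(* A walk from X that first reaches Zx at its end and a walk to Y that leaves
   Zy right after its start can only share vertices of a separator S
   contained in Zx and Zy: otherwise splicing them avoids S. *)
Lemma crossing_in_separator e X Y S (Zx Zy : {set T}) a p b q u :
  separates e X Y S -> S \subset Zx -> S \subset Zy ->
  a \in X -> path e a p -> {in belast a p, forall w, w \notin Zx} ->
  path e b q -> last b q \in Y -> {in q, forall w, w \notin Zy} ->
  u \in a :: p -> u \in b :: q -> u \in S.
Proof.
move=> HS SZx SZy Xa Pp Bp Qp Ql Nq Hu1 Hu2; apply/negPn/negP => uS.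
have [r [Pr Lr Sr]] := splice Pp Qp Hu1 Hu2.
have Lr' : last a r \in Y by rewrite Lr.
have [w win wS] := HS a r Xa Pr Lr'.
move: (Sr w win); rewrite !inE => /orP[/orP[/eqP wu | wb] | wq].
- by move: wS; rewrite wu (negbTE uS).
- by move: (Bp w wb); rewrite (subsetP SZx _ wS).
- by move: (Nq w wq); rewrite (subsetP SZy _ wS).
Qed.

(* Redirecting the vertex x to y maps x |: S injectively into y |: S when
   y is not in S; it tells at which vertex the continuation of a walk ending
   in x |: S must start. *)
Definition redirect x y u : T := if u == x then y else u.

Lemma redirect_mem x y S u : u \in x |: S -> redirect x y u \in y |: S.
Proof.
rewrite /redirect !inE; case: eqP => [_|_] /=; first by rewrite eqxx.
by move=> ->; rewrite orbT.
Qed.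

Lemma redirect_inj x y S : y \notin S -> {in x |: S &, injective (redirect x y)}.
Proof.
move=> yS u w; rewrite /redirect !inE.
case: eqP => [->|_] /= uS; case: eqP => [->|_] //= wS.
- by move=> yw; move: wS; rewrite -yw (negbTE yS).
- by move=> uy; move: uS; rewrite uy (negbTE yS).
Qed.

Definition join_tail x (z b : T) q := if z == x then b :: q else q.

Lemma join_walk e e' x y a p b q : subrel e' e -> e x y ->
  path e' a p -> path e' b q -> b = redirect x y (last a p) ->
  path e a (p ++ join_tail x (last a p) b q) /\
  last a (p ++ join_tail x (last a p) b q) = last b q.
Proof.
move=> sub Exy /(sub_path sub) Pp /(sub_path sub) Qp.
rewrite /redirect /join_tail cat_path last_cat Pp.
by case: eqP => [zx|_] bE; subst b; rewrite /= ?zx ?Exy Qp.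
Qed.

(* Once trimmed, the walks of P end in x |: S and those of Q start in y |: S;
   they meet only in S, so each walk of P ending at z continues along the walk
   of Q starting at z (or at y, through the edge x -> y, when z = x). *)
Lemma linkage_glue e e' x y X Y S k P Q :
  subrel e' e -> e x y -> separates e' X Y S -> x \notin S -> y \notin S ->
  #|y |: S| = k -> linkage e' X (x |: S) k P -> linkage e' (y |: S) Y k Q ->
  exists P', linkage e X Y k P'.
Proof.
move=> sub Exy HS xS yS cSy /linkage_trim_end [{}P [[P1 P2] Pend]].
move=> /linkage_trim_start [{}Q [HQ Qst]]; have Qonto := linkage_onto HQ cSy.
case: HQ => Q1 Q2.
pose a i := (P i).1; pose p i := (P i).2; pose z i := last (a i) (p i).
have zSx i : z i \in x |: S by case: (P1 i).
have /fin_all_exists [sig Hsig] i : exists j, (Q j).1 = redirect x y (z i).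
  by apply: Qonto; apply: redirect_mem.
have rz i j : redirect x y (z i) = redirect x y (z j) -> i = j.
  move/(redirect_inj yS (zSx i) (zSx j)) => zz.
  by apply: (P2 i j (z i)); [|rewrite zz]; apply: mem_last.
(* Vertices shared by a walk of P and a walk of Q lie in S, so they are the
   end of the former and the start of the latter. *)
have PQ i j u : u \in a i :: p i -> u \in (Q (sig j)).1 :: (Q (sig j)).2 -> i = j.
  move=> Hu1 Hu2; have [Xa Pp _] := P1 i; have [_ Qp Ql] := Q1 (sig j).
  have uS := crossing_in_separator HS (subsetUr _ _) (subsetUr _ _) Xa Pp
    (Pend i) Qp Ql (Qst _) Hu1 Hu2.
  have uz : u = z i by apply: in_last_only Hu1 _ (Pend i); rewrite inE uS orbT.
  have ub : u = (Q (sig j)).1.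
    move: Hu2; rewrite inE => /orP[/eqP -> //|uq].
    by move: (Qst _ u uq); rewrite inE uS orbT.
  apply: rz; rewrite -(Hsig j) -ub uz /redirect ifN //.
  by apply: contraTneq uS; rewrite uz => ->.
pose rest i := join_tail x (z i) (Q (sig i)).1 (Q (sig i)).2.
have restP i u : u \in a i :: (p i ++ rest i) ->
    u \in a i :: p i \/ u \in (Q (sig i)).1 :: (Q (sig i)).2.
  rewrite -cat_cons mem_cat => /orP[H|H]; [by left | right].
  by move: H; rewrite /rest /join_tail; case: ifP => // _ H; rewrite inE H orbT.
exists (fun i => (a i, p i ++ rest i)); split.
  move=> i /=; have [Xa Pp _] := P1 i; have [_ Qp Ql] := Q1 (sig i).
  by have [-> ->] := join_walk sub Exy Pp Qp (Hsig i).
move=> i j u /restP [H1|H1] /restP [H2|H2].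
- exact: P2 H1 H2.
- exact: PQ H1 H2.
- exact/esym/(PQ _ _ _ H2 H1).
- by apply: rz; rewrite -!Hsig (Q2 _ _ _ H1 H2).
Qed.

(* Induction on the number of
   edges: delete an edge x -> y; either the bound survives, or a small
   separator S of the smaller graph yields the two linkages to glue. *)
Theorem menger E X Y k : (forall S, separates E X Y S -> k <= #|S|) ->
  exists P, linkage E X Y k P.
Proof.
move: {2}#|edges E| (leqnn #|edges E|) => n.
elim: n E X Y k => [|n IH] E X Y k HE Hs.
  by apply: menger_edgeless Hs; apply/eqP; rewrite -cards_eq0 -leqn0.
have [E0|[[x y] Exy]] := set_0Vmem (edges E); first exact: menger_edgeless.
move: Exy; rewrite inE /= => Exy.
set E' := edel E x y.
have E'E : subrel E' E by move=> u w /andP[].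
have HE' : #|edges E'| <= n.
  rewrite -ltnS; apply: leq_trans HE; apply: proper_card; apply/properP; split.
    by apply/subsetP => [[u w]]; rewrite !inE => /E'E.
  by exists (x, y); rewrite !inE /E' /edel /= ?eqxx ?andbF.
case: (classic (forall S, separates E' X Y S -> k <= #|S|)) => [H|].
  by have [P HP] := IH E' X Y k HE' H; exists P; apply: linkage_sub HP.
move=> /(not_all_ex_not _ _) [S HS].
have [HS1 /negP] := imply_to_and _ _ HS; rewrite -ltnNge => HSk.
have sepSx := separates_edel (or_introl erefl) HS1.
have sepSy := separates_edel (or_intror erefl) HS1.
have xS : x \notin S.
  by apply/negP => xS; have := Hs _ sepSx; rewrite cardsU1 xS leqNgt HSk.
have yS : y \notin S.
  by apply/negP => yS; have := Hs _ sepSy; rewrite cardsU1 yS leqNgt HSk.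
have cSy : #|y |: S| = k.
  by apply/eqP; rewrite eqn_leq (Hs _ sepSy) andbT cardsU1 yS.
have [P HP] := IH E' X (x |: S) k HE' (fun U HU => Hs U (separates_front sepSx HU)).
have [Q HQ] := IH E' (y |: S) Y k HE' (fun U HU => Hs U (separates_back sepSy HU)).
exact: linkage_glue E'E Exy HS1 xS yS cSy HP HQ.
Qed.

End Menger.

Section FlowBounds.
Local Open Scope ring_scope.
Variables (R : realFieldType) (N : finType) (E : rel N) (s t : N)
  (cV : N -> option R) (cD : N -> N -> option R).

Definition edge_flow (f : N -> N -> R) x y := if E x y then f x y else 0.

Lemma outflowE f x : outflow E f x = \sum_y edge_flow f x y.
Proof. exact: big_mkcond. Qed.

Lemma inflowE f x : inflow E f x = \sum_u edge_flow f u x.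
Proof. exact: big_mkcond. Qed.

(* Conservation: for a set U containing the source (which has no incoming
   edge) but not the sink, the size of a flow is the net flow out of U, hence
   at most the flow on the edges leaving U. *)
Lemma flow_size_le_cut f (U : {set N}) : is_flow E s t cV cD f ->
  (forall x, ~~ E x s) -> s \in U -> t \notin U ->
  flow_size E s f <= \sum_(x in U) \sum_(y | y \notin U) edge_flow f x y.
Proof.
move=> [Hf Hc] Hs sU tU.
have F0 x y : 0 <= edge_flow f x y by rewrite /edge_flow; case: ifP => // /Hf [].
have net : flow_size E s f = \sum_(x in U) (outflow E f x - inflow E f x).
  rewrite (bigD1 s) //= big1 ?addr0.
    by rewrite [inflow _ _ _]big1 ?subr0 // => u Eu; move: (Hs u); rewrite Eu.
  move=> x /andP[xU xs]; have xt : x != t by apply: contraNneq tU => <-.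
  by have [-> _] := Hc x xs xt; rewrite subrr.
have Hout : \sum_(x in U) outflow E f x =
   \sum_(x in U) \sum_(y in U) edge_flow f x y +
   \sum_(x in U) \sum_(y | y \notin U) edge_flow f x y.
  rewrite -big_split /=; apply: eq_bigr => x _.
  by rewrite outflowE (bigID (mem U)).
have Hin : \sum_(x in U) inflow E f x =
   \sum_(x in U) \sum_(y in U) edge_flow f x y +
   \sum_(x in U) \sum_(u | u \notin U) edge_flow f u x.
  rewrite [X in _ = X + _]exchange_big -big_split /=; apply: eq_bigr => x _.
  by rewrite inflowE (bigID (mem U)).
rewrite net sumrB Hout Hin opprD addrACA subrr add0r lerBlDr lerDl.
by do 2!apply: sumr_ge0 => ? _.
Qed.

Lemma flow_cut f (U S : {set N}) : is_flow E s t cV cD f ->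
  (forall x, ~~ E x s) -> s \in U -> t \notin U ->
  (forall x y, x \in U -> y \notin U -> E x y -> y \in S) ->
  (forall y, y \in S -> [/\ y != s, y != t & cV y = Some 1]) ->
  flow_size E s f <= #|S|%:R.
Proof.
move=> Hflow Hs sU tU Hcr HS; have [Hf Hc] := Hflow.
have F0 x y : 0 <= edge_flow f x y by rewrite /edge_flow; case: ifP => // /Hf [].
apply: (le_trans (flow_size_le_cut Hflow Hs sU tU)).
apply: (@le_trans _ _ (\sum_(x in U) \sum_(y in S) edge_flow f x y)).
  apply: ler_sum => x xU; rewrite [X in X <= _]big_mkcond [X in _ <= X]big_mkcond.
  apply: ler_sum => y _ /=; case: ifP => yU; last by case: ifP.
  rewrite /edge_flow; case Exy: (E x y); last by case: ifP.
  by rewrite (Hcr x y xU yU Exy).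
apply: (@le_trans _ _ (\sum_x \sum_(y in S) edge_flow f x y)).
  rewrite [X in _ <= X](bigID (mem U)) /= lerDl.
  by do 2!apply: sumr_ge0 => ? _.
rewrite exchange_big /= -sum1_card natr_sum; apply: ler_sum => y yS.
have [ys yt cy] := HS y yS; have [_] := Hc y ys yt.
by rewrite -inflowE cy.
Qed.

Lemma walk_entries (e : rel N) a r x : path e a r ->
  (\sum_(u | e u x) count (pred1 (u, x)) (zip (a :: r) r) = count (pred1 x) r)%N.
Proof.
elim: r a => [|b r IH] a /=; first by move=> _; rewrite big1.
case/andP => eab Hp; rewrite big_split /= IH //; congr (_ + _)%N.
have [<-|bx] := eqVneq b x.
  rewrite (bigD1 a) //= eqxx big1 // => u /andP[_ ua].
  by rewrite xpair_eqE eq_sym (negbTE ua).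
by rewrite big1 // => u _; rewrite xpair_eqE (negbTE bx) andbF.
Qed.

Lemma walk_exits (e : rel N) a r x : path e a r ->
  (\sum_(w | e x w) count (pred1 (x, w)) (zip (a :: r) r) =
   count (pred1 x) (belast a r))%N.
Proof.
elim: r a => [|b r IH] a /=; first by move=> _; rewrite big1.
case/andP => eab Hp; rewrite big_split /= IH //; congr (_ + _)%N.
have [<-|ax] := eqVneq a x.
  rewrite (bigD1 b) //= eqxx big1 // => u /andP[_ ua].
  by rewrite xpair_eqE eqxx eq_sym (negbTE ua).
by rewrite big1 // => u _; rewrite xpair_eqE (negbTE ax).
Qed.

Lemma flow_of_paths k (W : 'I_k -> seq N) :
  (forall i, path E s (W i ++ [:: t])) -> (forall i, s \notin W i) ->
  (forall i, t \notin W i) -> (forall i, uniq (W i)) ->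
  (forall i j u, u \in W i -> u \in W j -> i = j) ->
  (forall x, x != s -> x != t -> cV x = Some 1) ->
  (forall x y, cD x y = None) ->
  exists f, is_flow E s t cV cD f /\ flow_size E s f = k%:R.
Proof.
move=> Hp Hs Ht Hu Hd HcV HcD.
pose cnt i x y := count (pred1 (x, y)) (zip (s :: W i ++ [:: t]) (W i ++ [:: t])).
pose f x y : R := (\sum_i cnt i x y)%:R.
have Hin x : inflow E f x = (\sum_i count (pred1 x) (W i ++ [:: t]))%:R.
  rewrite /inflow /f -natr_sum exchange_big /=; congr (_ %:R).
  by apply: eq_bigr => i _; rewrite walk_entries.
have Hout x : outflow E f x = (\sum_i count (pred1 x) (s :: W i))%:R.
  rewrite /outflow /f -natr_sum exchange_big /=; congr (_ %:R).
  by apply: eq_bigr => i _; rewrite walk_exits // cats1 belast_rcons.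
exists f; split; last first.
  rewrite /flow_size Hout (eq_bigr (fun _ => 1%N)) ?sum1_card ?card_ord //.
  by move=> i _ /=; rewrite eqxx (count_memPn (Hs i)).
split=> [x y _|x xs xt]; first by rewrite /f ler0n HcD.
rewrite Hin Hout HcV //=.
have Wt i : count (pred1 x) (W i ++ [:: t]) = count (pred1 x) (W i).
  by rewrite count_cat /= (eq_sym t x) (negbTE xt) !addn0.
rewrite (eq_bigr _ (fun i _ => Wt i)).
split.
  by congr (_ %:R); apply: eq_bigr => i _ /=; rewrite (eq_sym s x) (negbTE xs).
rewrite lern1; case: (pickP (fun i => x \in W i)) => [i xi|Hn].
  rewrite (bigD1 i) //= big1 ?addn0; first by rewrite (count_uniq_mem _ (Hu i)) xi.
  move=> j ji; apply/count_memPn; apply/negP => xj.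
  by move: ji; rewrite (Hd _ _ _ xj xi) eqxx.
by rewrite big1 // => i _; apply/count_memPn; rewrite Hn.
Qed.

End FlowBounds.

Section Network.
Variables (m : nat) (D B : rel 'I_m) (v : 'I_m) (A : {set 'I_m}).
Local Open Scope ring_scope.

Local Notation Eg := (gflow_edge D B v A).

Definition internal (x : fnode m) :=
  match x with Lnode _ | Rnode _ => true | _ => false end.

Definition inner_edge : rel (fnode m) :=
  fun x y => [&& Eg x y, internal x & internal y].
Definition Lset := [set Lnode a | a in A].
Definition Rpa := [set Rnode w | w in pa D v].

Lemma Rnode_inj : injective (@Rnode m). Proof. by move=> x y []. Qed.
Lemma Lnode_inj : injective (@Lnode m). Proof. by move=> x y []. Qed.

Lemma internal_last (e : rel (fnode m)) a p :
  (forall x y, e x y -> internal y) -> internal a -> path e a p ->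
  internal (last a p).
Proof. by move=> He; elim: p a => //= b p IH a _ /andP[/He ib]; apply: IH. Qed.

Lemma Lset_internal a : a \in Lset -> internal a.
Proof. by case/imsetP => ? _ ->. Qed.

Section Cut.
Variable S : {set fnode m}.

Definition avoid_edge : rel (fnode m) := fun x y => inner_edge x y && (y \notin S).
Definition cut_side :=
  [set x | (x == Src) || [exists a in Lset :\: S, connect avoid_edge a x]].

Lemma avoid_edge_internal x y : avoid_edge x y -> internal y.
Proof. by case/andP => /and3P[]. Qed.

Lemma avoid_path_notin a p : path avoid_edge a p -> {in p, forall u, u \notin S}.
Proof.
elim: p a => //= b p IH a /andP[/andP[_ bS] Hp] u.
by rewrite inE => /orP[/eqP-> //|]; apply: IH Hp u.
Qed.

Lemma cut_sideP x : x \in cut_side -> x != Src -> exists a, exists2 p,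
  [/\ a \in Lset, a \notin S & path avoid_edge a p] & x = last a p.
Proof.
rewrite inE => /orP[/eqP->|]; first by rewrite eqxx.
case/exists_inP => a; rewrite inE => /andP[aS aX] /connectP [p Hp ->] _.
by exists a, p.
Qed.

Lemma cut_side_internal x : x \in cut_side -> x != Src -> internal x.
Proof.
move=> /cut_sideP H /H [a [p [aX _ Hp] ->]].
exact: internal_last avoid_edge_internal (Lset_internal aX) Hp.
Qed.

Lemma cut_side_closed x y : x \in cut_side -> Eg x y -> internal y ->
  y \notin S -> y \in cut_side.
Proof.
move=> xU Exy iy yS; rewrite inE; apply/orP; right; apply/exists_inP.
have [xs|xs] := eqVneq x Src.
  rewrite xs in Exy; case: y Exy iy yS => // a' aA _ yS.
  by exists (Lnode a'); [rewrite !inE yS imset_f | apply: connect0].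
have [a [p [aX aS Hp] xE]] := cut_sideP xU xs.
exists a; first by rewrite inE aS.
apply: (connect_trans (y := x)); first by apply/connectP; exists p.
by apply: connect1; rewrite /avoid_edge /inner_edge Exy iy cut_side_internal.
Qed.

Lemma cut_side_no_sink x : separates inner_edge Lset Rpa S ->
  x \in cut_side -> ~~ Eg x Snk.
Proof.
move=> HS xU; apply/negP => Ex; case: x xU Ex => // w wU Dw.
have [a [p [aX aS Hp] wE]] := cut_sideP wU isT.
have Hp' : path inner_edge a p by apply: sub_path Hp => ? ? /andP[].
have Hl : last a p \in Rpa by rewrite -wE imset_f // inE.
have [u] := HS a p aX Hp' Hl; rewrite inE => /orP[/eqP->|uin]; first exact/negP.
by apply/negP; apply: avoid_path_notin Hp _ uin.
Qed.

End Cut.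

Lemma separator_bound (R : realFieldType) f (S : {set fnode m}) :
  is_flow Eg Src Snk (@gflow_cap_node R m) (@gflow_cap_edge R m) f ->
  separates inner_edge Lset Rpa S -> flow_size Eg Src f <= #|S|%:R.
Proof.
move=> Hf HS; pose S' := [set y in S | internal y].
apply: (le_trans (flow_cut (U := cut_side S) (S := S') Hf _ _ _ _ _)).
- by case.
- by rewrite inE eqxx.
- by apply/negP => /cut_side_internal /(_ isT).
- move=> x y xU yU Exy; rewrite inE.
  case iy: (internal y); last first.
    case: y iy yU Exy => //; first by case: x xU.
    by move=> _ _ Ex; move: (cut_side_no_sink HS xU); rewrite Ex.
  rewrite andbT; apply: contraNT yU => yS.
  exact: cut_side_closed xU Exy _ yS.
- by move=> y; rewrite inE => /andP[_]; case: y.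
- rewrite ler_nat; apply: subset_leq_card; apply/subsetP => y.
  by rewrite inE => /andP[].
Qed.

(* R(pa(v)) itself separates L(A) from R(pa(v)), so no flow exceeds |pa(v)|. *)
Lemma flow_le_pa (R : realFieldType) f :
  is_flow Eg Src Snk (@gflow_cap_node R m) (@gflow_cap_edge R m) f ->
  flow_size Eg Src f <= #|pa D v|%:R.
Proof.
move=> Hf; have -> : #|pa D v| = #|Rpa| by rewrite card_imset //; apply: Rnode_inj.
apply: separator_bound Hf _ => a p _ _ Hl; exists (last a p) => //.
exact: mem_last.
Qed.

(* A family of half-treks with injective sources and targets and pairwise
   disjoint right sides is a system without sided intersection between its
   sets of sources and targets (left sides are the singleton sources). *)
Lemma ht_system_of k (h : 'I_k -> halftrek m) :
  (forall i, is_half_trek D B (h i)) ->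
  injective (fun i => ht_source (h i)) -> injective (fun i => ht_target (h i)) ->
  (forall i j, i != j -> [disjoint ht_right (h i) & ht_right (h j)]) ->
  ht_system_nsi D B [set ht_source (h i) | i in 'I_k]
    [set ht_target (h i) | i in 'I_k].
Proof.
move=> Hh sinj tinj Hr; exists k, h; do !split => //.
move=> i j ij; rewrite /ht_left disjoints1 inE.
by apply: contra ij => /eqP /sinj ->.
Qed.

Lemma Rwalk w p : path inner_edge (Rnode w) p ->
  exists ps, p = map (@Rnode m) ps /\ path D w ps.
Proof.
elim: p w => [|c p IH] w /=; first by exists [::].
case/andP; case: c => [||u|u]; rewrite /inner_edge /= ?andbF //.
rewrite andbT => Dwu /IH [ps [-> Hps]].
by exists (u :: ps); rewrite /= Dwu Hps.
Qed.

Lemma Dpath_map w ps : path D w ps -> path Eg (Rnode w) (map (@Rnode m) ps).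
Proof. by elim: ps w => //= u ps IH w /andP[-> /IH]. Qed.

(* Decoding: an inner walk L(a) -> R(w0) -> ... -> R(w) with w in pa(v) is a
   half-trek from a to w (starting with a bidirected edge unless w0 = a),
   whose right side is visited by the walk and whose target is on the walk. *)
Lemma decode x p : x \in Lset -> path inner_edge x p -> last x p \in Rpa ->
  exists a h, [/\ x = Lnode a, a \in A, is_half_trek D B h & ht_source h = a] /\
    [/\ ht_target h \in pa D v, Rnode (ht_target h) \in x :: p &
        {in ht_right h, forall r, Rnode r \in p}].
Proof.
case/imsetP => a aA ->; case: p => [|c p2] /=; first by move=> _ /imsetP [].
case/andP; case: c => // w0 /and3P[Ea _ _] /Rwalk [ps [-> Hps]].
rewrite last_map => /imsetP [t tpa /Rnode_inj Ht].
move: Ea; rewrite /= aA /= => Ea.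
have Hlast : Rnode (last w0 ps) \in Lnode a :: Rnode w0 :: map (@Rnode m) ps.
  by rewrite -last_map inE mem_last orbT.
have on_walk r : r \in w0 :: ps -> Rnode r \in Rnode w0 :: map (@Rnode m) ps.
  by rewrite -map_cons mem_map //; apply: Rnode_inj.
have [Hw|Hw] := eqVneq w0 a.
  subst w0; exists a, (a, last a ps, false, ps); do !split => //=.
  - by rewrite Hps eqxx.
  - by rewrite Ht.
  - by move=> r; rewrite inE => /on_walk.
move: Ea; rewrite (negbTE Hw) /= => Ea.
exists a, (a, last w0 ps, true, w0 :: ps); do !split => //=.
- by rewrite Ea Hps eqxx.
- by rewrite Ht.
- by move=> r; rewrite inE => /on_walk.
Qed.

Lemma encode (h : halftrek m) : is_half_trek D B h -> ht_source h \in A ->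
  ht_target h \in pa D v ->
  exists W : seq (fnode m), [/\ path Eg Src (W ++ [:: Snk]), Src \notin W,
    Snk \notin W, uniq W & forall u, u \in W ->
    u = Lnode (ht_source h) \/ exists2 r, u = Rnode r & r \in ht_right h].
Proof.
case: h => [[[y w] b] p] Hh yA wpa.
rewrite /ht_source /ht_target /= in yA wpa *.
pose rs := if b then p else y :: p.
have [Hpath Hlast] : path Eg (Lnode y) (map (@Rnode m) rs) /\
    last (Lnode y) (map (@Rnode m) rs) = Rnode w.
  rewrite /rs; clear rs; case: b Hh => [|/andP[Hp /eqP Hl] /=].
    case: p => // w0 p' /and3P[Byw Hp /eqP Hl] /=.
    by rewrite yA Byw orbT Dpath_map // last_map Hl.
  by rewrite yA eqxx Dpath_map // last_map Hl.
move: Hlast; case: (shortenP Hpath) => p' Hp' Hu Hsub Hl'.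
have Hsub' u : u \in p' -> exists2 r, u = Rnode r & r \in rs.
  by move=> /Hsub /mapP [r rin ->]; exists r.
exists (Lnode y :: p'); split => //.
- by rewrite /= yA /= cat_path Hp' /= Hl' /= andbT; move: wpa; rewrite inE.
- by rewrite inE /=; apply/negP => /Hsub' [r].
- by rewrite inE /=; apply/negP => /Hsub' [r].
- move=> u; rewrite inE => /orP[/eqP ->|/Hsub' [r -> rin]]; first by left.
  by right; exists r => //; move: rin; rewrite /rs; case: ifP; rewrite ?inE.
Qed.

(* If some Y in A satisfies the half-trek criterion, routing one unit along
   the encoding of each half-trek of the system gives a flow of size |pa(v)|:
   the paths are disjoint because sources are distinct and right sides are
   pairwise disjoint. *)
Lemma htc_gives_flow (R : realFieldType) (Y : {set 'I_m}) : Y \subset A ->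
  half_trek_criterion D B Y v ->
  exists f, is_flow Eg Src Snk (@gflow_cap_node R m) (@gflow_cap_edge R m) f /\
    flow_size Eg Src f = #|pa D v|%:R.
Proof.
move=> YA [_ _ [k [h [Hht [sinj [simg [tinj [timg [_ Hr]]]]]]]]].
have -> : #|pa D v| = k by rewrite -timg card_imset // card_ord.
have /fin_all_exists [W HW] i : exists W : seq (fnode m),
    [/\ path Eg Src (W ++ [:: Snk]), Src \notin W, Snk \notin W, uniq W &
    forall u, u \in W -> u = Lnode (ht_source (h i)) \/
      exists2 r, u = Rnode r & r \in ht_right (h i)].
  apply: encode (Hht i) _ _; last by rewrite -timg; apply: imset_f.
  by apply: (subsetP YA); rewrite -simg; apply: imset_f.
apply: (flow_of_paths (W := W)) => [i|i|i|i|i j u ui uj|[]//|//]; try by case: (HW i).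
have [_ _ _ _ Hi] := HW i; have [_ _ _ _ Hj] := HW j.
case: (Hi u ui) => [Eu|[r Eu ri]]; case: (Hj u uj) => [Eu'|[r' Eu' rj]];
  rewrite Eu in Eu' => //.
- exact: sinj (Lnode_inj Eu').
- move: Eu' => /Rnode_inj Er; subst r'; apply/eqP/negP => /negP ij.
  by have := Hr i j ij; rewrite -setI_eq0 => /eqP /setP /(_ r); rewrite !inE ri rj.
Qed.

(* A linkage of order |pa(v)| from L(A) to R(pa(v)) decodes into half-treks
   whose sources form a set Y in A satisfying the half-trek criterion:
   disjointness of the walks makes sources and targets distinct and right
   sides pairwise disjoint. *)
Lemma linkage_htc k P : A \subset ~: (v |: sib B v) -> k = #|pa D v| ->
  linkage inner_edge Lset Rpa k P ->
  exists Y : {set 'I_m}, Y \subset A /\ half_trek_criterion D B Y v.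
Proof.
move=> hA kpa [P1 P2].
have /fin_all_exists [ah Hah] i : exists ah : 'I_m * halftrek m,
    [/\ (P i).1 = Lnode ah.1, ah.1 \in A, is_half_trek D B ah.2 &
        ht_source ah.2 = ah.1] /\
    [/\ ht_target ah.2 \in pa D v, Rnode (ht_target ah.2) \in (P i).1 :: (P i).2 &
        {in ht_right ah.2, forall r, Rnode r \in (P i).2}].
  by have [Xi Pi Li] := P1 i; have [a [h H]] := decode Xi Pi Li; exists (a, h).
pose h i := (ah i).2.
have sA i : ht_source (h i) \in A by have [[_ ? _ ->] _] := Hah i.
have sinj : injective (fun i => ht_source (h i)).
  move=> i j /= Hij; apply: (P2 i j (P i).1); first exact: mem_head.
  have [[Ei _ _ Si] _] := Hah i; have [[Ej _ _ Sj] _] := Hah j.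
  by rewrite Ei -Si Hij Sj -Ej mem_head.
have tinj : injective (fun i => ht_target (h i)).
  move=> i j /= Hij; have [_ [_ Ti _]] := Hah i; have [_ [_ Tj _]] := Hah j.
  by apply: (P2 i j _ Ti); rewrite -/(h i) Hij.
have timg : [set ht_target (h i) | i in 'I_k] = pa D v.
  apply/eqP; rewrite eqEcard card_imset // card_ord -kpa leqnn andbT.
  by apply/subsetP => _ /imsetP [i _ ->]; have [_ [? _ _]] := Hah i.
exists [set ht_source (h i) | i in 'I_k]; split.
  by apply/subsetP => _ /imsetP [i _ ->].
split; first by rewrite card_imset // card_ord.
  apply/setP => z; rewrite in_set0; apply/negbTE/negP.
  rewrite inE => /andP[/imsetP [i _ ->] zv].
  by have := subsetP hA _ (sA i); rewrite inE zv.
rewrite -timg; apply: ht_system_of => // [i|i j ij].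
  by have [[_ _ ? _] _] := Hah i.
rewrite -setI_eq0; apply/eqP/setP => r; rewrite !inE.
apply/negbTE/negP => /andP[ri rj].
have [_ [_ _ Ri]] := Hah i; have [_ [_ _ Rj]] := Hah j.
by move: ij; rewrite (P2 i j (Rnode r)) ?eqxx // inE ?Ri ?Rj ?orbT.
Qed.

(* A flow of size |pa(v)| forces every inner separator to have at least
   |pa(v)| nodes, so Menger's theorem provides the linkage to decode. *)
Lemma flow_gives_htc (R : realFieldType) f : A \subset ~: (v |: sib B v) ->
  is_flow Eg Src Snk (@gflow_cap_node R m) (@gflow_cap_edge R m) f ->
  flow_size Eg Src f = #|pa D v|%:R ->
  exists Y : {set 'I_m}, Y \subset A /\ half_trek_criterion D B Y v.
Proof.
move=> hA Hf Hs.
have Hsep S : separates inner_edge Lset Rpa S -> (#|pa D v| <= #|S|)%N.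
  by move=> HS; rewrite -(ler_nat R) -Hs; apply: separator_bound Hf HS.
by have [P HP] := menger Hsep; apply: linkage_htc hA erefl HP.
Qed.

End Network.

Theorem mainTheorem8 (R : realFieldType) (m : nat) (D B : rel 'I_m)
  (hG : mixed_graph D B) (v : 'I_m) (A : {set 'I_m})
  (hA : A \subset ~: (v |: sib B v)) :
  (exists Y : {set 'I_m}, Y \subset A /\ half_trek_criterion D B Y v) <->
  max_flow_size_is (gflow_edge D B v A) Src Snk
    (@gflow_cap_node R m) (@gflow_cap_edge R m) (#|pa D v|%:R)%R.
Proof.
split=> [[Y [YA HY]]|[[f [Hf Hs]] _]].
  by split=> [|f Hf]; [apply: htc_gives_flow YA HY | apply: flow_le_pa].
exact: flow_gives_htc hA Hf Hs.
Qed.
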